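(* Let $n\ge2$, let $F:\mathbf{R}^n\to\mathbf{R}$ be an integrand and let $O_F:=\mathrm{Hypo}(\mathcal{I}\circ\mathcal{D}(F))$. Then $\mathfrak{P}O_F=K_F$ and $\mathfrak{P}K_F=O_F$. In particular, $O_F$ is a compact convex set containing $0$ in its interior.
   Context: $\mathbb{S}^{n-1}$ is the unit sphere. An integrand is a lower semicontinuous $F:\mathbf{R}^n\to\mathbf{R}$ with $F(\lambda x)=\lambda F(x)$ for $\lambda\ge0$ and $F>0$ on $\mathbb{S}^{n-1}$. $K_F:=\bigcap_{v\in\mathbb{S}^{n-1}}\{z:\langle z,v\rangle\le F(v)\}$. For $\Omega\subseteq\mathbf{R}^n$, $\mathfrak{P}\Omega:=\{z:\langle z,x\rangle\le1\ \forall x\in\Omega\}$. Operators on integrands (defined on $\mathbb{S}^{n-1}$ and extended by 1-homogeneity): $\mathcal{W}(F)(v):=\inf_{w\in\mathbb{S}^{n-1},\langle v,w\rangle>0}F(w)/\langle v,w\rangle$, $\mathcal{A}(G)(v):=\sup_{w\in\mathbb{S}^{n-1}}G(w)\langle v,w\rangle$, $\mathcal{I}(G)(v):=1/G(v)$, and $\mathcal{D}(F):=\mathcal{A}(\mathcal{W}(F))$. For an integrand $G$, its polar hypograph is $\mathrm{Hypo}(G):=\{\lambda G(v)v: v\in\mathbb{S}^{n-1},\ 0\le\lambda\le1\}$. *)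

From HB Require Import structures.
From mathcomp Require Import all_boot all_order all_algebra.
From mathcomp Require Import all_classical all_reals all_analysis.
Set Implicit Arguments. Unset Strict Implicit. Unset Printing Implicit Defensive.
Import Order.TTheory GRing.Theory Num.Theory.
Import numFieldNormedType.Exports.
Local Open Scope classical_set_scope.
Local Open Scope ring_scope.

Section Defs.
Variables (R : realType) (n : nat).
Local Notation V := 'rV[R]_n.

Definition dotp (x y : V) : R := \sum_(i < n) x ord0 i * y ord0 i.
Definition enorm (x : V) : R := Num.sqrt (dotp x x).

Definition sphere : set V := [set v | enorm v = 1].

Definition homog1 (F : V -> R) := forall (l : R) (x : V), 0 <= l -> F (l *: x) = l * F x.

Definition integrand (F : V -> R) :=
  lower_semicontinuous (fun x => (F x)%:E) /\ homog1 F /\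
  (forall v, sphere v -> 0 < F v).

Definition hext (g : V -> R) (x : V) : R :=
  if x == 0 then 0 else enorm x * g ((enorm x)^-1 *: x).

Definition KF (F : V -> R) : set V :=
  [set z | forall v, sphere v -> dotp z v <= F v].

Definition polar (O : set V) : set V :=
  [set z | forall x, O x -> dotp z x <= 1].

Definition Wop (F : V -> R) : V -> R :=
  hext (fun v => inf [set F w / dotp v w | w in [set w | sphere w /\ 0 < dotp v w]]).

Definition Aop (G : V -> R) : V -> R :=
  hext (fun v => sup [set G w * dotp v w | w in sphere]).

Definition Iop (G : V -> R) : V -> R := hext (fun v => (G v)^-1).

Definition Dop (F : V -> R) : V -> R := Aop (Wop F).

Definition Hypo (G : V -> R) : set V :=
  [set z | exists v l, [/\ sphere v, 0 <= l, l <= 1 & z = (l * G v) *: v]].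

End Defs.

From HB Require Import structures.
From mathcomp Require Import all_boot all_order all_algebra.
From mathcomp Require Import all_classical all_reals all_analysis.
From mathcomp Require Import lra.
Import Order.TTheory GRing.Theory Num.Theory.
Import numFieldNormedType.Exports.
Local Open Scope classical_set_scope.
Local Open Scope ring_scope.

(* Lower semicontinuity and compactness of the sphere give [m <= F] on the sphere for
   some [m > 0], so [K := K_F] contains the ball of radius [m] and is bounded by the
   values of [F] at [+-e_i].  On a unit vector [u], [W(F)(u)] is the largest [t] with
   [t u \in K] (the radial function of [K]), hence [D(F)(v) = sup_w W(F)(w) <v, w>] is
   the support function [h] of [K], with [h <= F].  A point [x = |x| v] lies in the
   polar of [K] iff [|x| h(v) <= 1], i.e. iff it lies in the hypograph of [1/h], and
   [(h(u))^-1 u] in that polar forces [<z, u> <= h(u) <= F(u)] for [z] in the bipolar,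
   which is therefore [K].  Polars are closed and convex; the polar of [K] is bounded
   because [K] contains a ball, and is a neighbourhood of [0] because [K] is bounded. *)

Set Implicit Arguments. Unset Strict Implicit.

Section InnerProduct.
Variables (R : realType) (n : nat).
Local Notation V := 'rV[R]_n.
Implicit Types x y z u v w : V.

Lemma dotpC x y : dotp x y = dotp y x.
Proof. by apply: eq_bigr => i _; rewrite mulrC. Qed.

Lemma dotpDl x y z : dotp (x + y) z = dotp x z + dotp y z.
Proof. by rewrite /dotp -big_split; apply: eq_bigr => i _; rewrite !mxE mulrDl. Qed.

Lemma dotpZl a x y : dotp (a *: x) y = a * dotp x y.
Proof. by rewrite /dotp mulr_sumr; apply: eq_bigr => i _; rewrite !mxE mulrA. Qed.

Lemma dotpZr a x y : dotp x (a *: y) = a * dotp x y.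
Proof. by rewrite dotpC dotpZl dotpC. Qed.

Lemma dotpNl x y : dotp (- x) y = - dotp x y.
Proof. by rewrite -scaleN1r dotpZl mulN1r. Qed.

Lemma dotpNr x y : dotp x (- y) = - dotp x y.
Proof. by rewrite dotpC dotpNl dotpC. Qed.

Lemma dotp0r x : dotp x 0 = 0.
Proof. by rewrite -(scale0r (0 : V)) dotpZr mul0r. Qed.

Lemma dotpp_ge0 x : 0 <= dotp x x.
Proof. by apply: sumr_ge0 => i _; rewrite -expr2 sqr_ge0. Qed.

Lemma dotpp_eq0 x : (dotp x x == 0) = (x == 0).
Proof.
apply/idP/eqP => [|->]; last by rewrite dotp0r.
rewrite psumr_eq0 => [/allP x0|i _]; last by rewrite -expr2 sqr_ge0.
apply/rowP => i; rewrite mxE; apply/eqP.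
by have := x0 i (mem_index_enum i); rewrite /= -expr2 sqrf_eq0.
Qed.

Lemma sqr_coord_le_dotpp x i : x ord0 i ^+ 2 <= dotp x x.
Proof.
rewrite /dotp (bigD1 i) //= -expr2 lerDl.
by apply: sumr_ge0 => j _; rewrite -expr2 sqr_ge0.
Qed.

Lemma sphereP x : sphere x <-> dotp x x = 1.
Proof.
rewrite /sphere /enorm /=; split => [x1|->]; last exact: sqrtr1.
by rewrite -(sqr_sqrtr (dotpp_ge0 x)) x1 expr1n.
Qed.

Lemma sphere_neq0 u : sphere u -> u != 0.
Proof. by move/sphereP => u1; rewrite -dotpp_eq0 u1 oner_neq0. Qed.

Lemma sphereN u : sphere u -> sphere (- u).
Proof. by rewrite !sphereP dotpNl dotpNr opprK. Qed.

Lemma sphere_dotp_le1 u w : sphere u -> sphere w -> dotp u w <= 1.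
Proof.
move=> /sphereP u1 /sphereP w1; have := dotpp_ge0 (u - w).
by rewrite dotpDl !dotpNl !(dotpC _ (u - w)) !dotpDl !dotpNl u1 w1 (dotpC w u); lra.
Qed.

Lemma enorm_gt0 x : x != 0 -> 0 < enorm x.
Proof. by move=> x0; rewrite sqrtr_gt0 lt_def dotpp_eq0 x0 dotpp_ge0. Qed.

Lemma sphere_normalize x : x != 0 -> sphere ((enorm x)^-1 *: x).
Proof.
move=> x0; have xpos := enorm_gt0 x0.
rewrite /sphere /= /enorm dotpZl dotpZr mulrA -expr2 sqrtrM ?sqr_ge0 //.
by rewrite sqrtr_sqr ger0_norm ?invr_ge0 ?ltW // mulVf ?gt_eqF.
Qed.

Lemma normalizeK x : x != 0 -> enorm x *: ((enorm x)^-1 *: x) = x.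
Proof. by move=> x0; rewrite scalerA divff ?scale1r ?gt_eqF ?enorm_gt0. Qed.

Lemma hext_sphere g u : sphere u -> hext g u = g u.
Proof. by move=> u1; rewrite /hext (negbTE (sphere_neq0 u1)) u1 invr1 scale1r mul1r. Qed.

Definition unitv (i : 'I_n) : V := delta_mx ord0 i.

Lemma dotp_unitv x i : dotp x (unitv i) = x ord0 i.
Proof.
rewrite /dotp (bigD1 i) //= big1 => [|j ji]; first by rewrite mxE !eqxx mulr1 addr0.
by rewrite mxE (negbTE ji) andbF mulr0.
Qed.

Lemma sphere_unitv i : sphere (unitv i).
Proof. by rewrite sphereP dotp_unitv mxE !eqxx. Qed.

End InnerProduct.

Section Topology.
Variables (R : realType) (n : nat).
Local Notation V := 'rV[R]_n.

Lemma continuous_sum (T : topologicalType) (I : Type) (r : seq I) (f : I -> T -> R) :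
  (forall i, continuous (f i)) -> continuous (fun x => \sum_(i <- r) f i x).
Proof.
move=> fc; elim: r => [|i r IH].
  by under eq_fun do rewrite big_nil; exact: cst_continuous.
under eq_fun do rewrite big_cons.
by move=> x; apply: continuousD; [exact: fc | exact: IH].
Qed.

Lemma continuous_dotpl (z : V) : continuous (fun x : V => dotp x z).
Proof.
apply: continuous_sum => i x.
by apply: continuousM; [exact: coord_continuous | exact: cst_continuous].
Qed.

Lemma continuous_dotpp : continuous (fun x : V => dotp x x).
Proof. by apply: continuous_sum => i x; apply: continuousM; exact: coord_continuous. Qed.

Lemma coord_bounded_closed_compact (A : set V) (M : R) :
  closed A -> (forall x, A x -> forall i, `|x ord0 i| <= M) -> compact A.
Proof.
move=> Acl AM.
apply: (subclosed_compact Acl (@rV_compact _ _ (fun=> `[- M, M]%classic) _)).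
  by move=> _; exact: segment_compact.
by move=> x Ax i /=; rewrite in_itv /= -ler_norml; exact: AM.
Qed.

Lemma sphere_compact : compact (@sphere R n).
Proof.
apply: (coord_bounded_closed_compact (M := 1)).
  have -> : @sphere R n = (fun x => dotp x x) @^-1` [set 1].
    by apply/seteqP; split => x /sphereP.
  by apply: (proj1 (continuous_closedP _) continuous_dotpp); exact: closed_eq.
move=> x /sphereP x1 i; have := sqr_coord_le_dotpp x i.
by rewrite x1 -ler_sqrt ?sqrtr1 ?sqrtr_sqr //; lra.
Qed.

Lemma ball0_coord (r : R) (y : V) i : ball (0 : V) r y -> `|y ord0 i| < r.
Proof.
rewrite mx_norm_ball /ball_ /= sub0r normrN; apply: le_lt_trans.
have /mapP[j _ ->] : `|y ord0 i| \in [seq `|y k.1 k.2| | k : 'I_1 * 'I_n].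
  by apply/mapP; exists (ord0, i) => //=; rewrite mem_enum.
by rewrite [leRHS]/Num.norm /= mx_normrE; apply/bigmax_geP; right; exists j.
Qed.

End Topology.

Lemma lower_semicontinuous_compact_pos_lb (X : topologicalType) (R : realType)
    (f : X -> R) (A : set X) :
  lower_semicontinuous (fun x => (f x)%:E) -> compact A ->
  (forall x, A x -> 0 < f x) -> exists2 m, 0 < m & forall x, A x -> m <= f x.
Proof.
move=> lsc Acpt fpos.
have : \forall e \near (0 : R)^'+, A `<=` (fun x => e < f x).
  apply: (proj1 (compact_near_coveringP _) Acpt _ _ (fun e x => e < f x)).
  move=> x Ax; have fx0 := fpos x Ax.
  have [U Ux Uf] := lsc x (f x / 2) ltac:(rewrite lte_fin; lra).
  exists (U, [set e | e < f x / 2]); first by split => //; apply: nbhs_right_lt; lra.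
  by move=> [y e] [/= Uy ey]; have := Uf y Uy; rewrite lte_fin; lra.
move=> /(filterI (nbhs_right_gt 0)) /filter_ex [e [e0 eA]].
by exists e => // x Ax; exact/ltW/eA.
Qed.

Section Polar.
Variables (R : realType) (n : nat).
Local Notation V := 'rV[R]_n.
Implicit Types A : set V.

Lemma sub_polar_polar A : A `<=` polar (polar A).
Proof. by move=> z Az x Px; rewrite dotpC; exact: Px. Qed.

Lemma polar_closed A : closed (polar A).
Proof.
have -> : polar A = \bigcap_(z in A) (fun x => dotp x z) @^-1` [set r | r <= 1].
  by apply/seteqP; split => x Px z Az; exact: Px.
apply: closed_bigI => z _.
by apply: (proj1 (continuous_closedP _) (@continuous_dotpl _ _ z)); exact: closed_le.
Qed.

Lemma polar_convex A : convex_set (polar A : set (convex_lmodType V)).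
Proof.
move=> x y l; rewrite !inE => Px Py z Az.
change (dotp (l%:num *: x + (1 - l%:num) *: y) z <= 1).
have l0 : 0 <= l%:num by []; have l1 : l%:num <= 1 by [].
by rewrite dotpDl !dotpZl; have := Px z Az; have := Py z Az; nra.
Qed.

Lemma polar_compact A (m : R) : 0 < m ->
  (forall u, sphere u -> A (m *: u)) -> compact (polar A).
Proof.
move=> m0 Am; apply: (coord_bounded_closed_compact (M := m^-1)).
  exact: (@polar_closed A).
move=> x Px i; rewrite -(ler_pM2l m0) mulfV ?gt_eqF // -{1}(gtr0_norm m0) -normrM.
have := Px _ (Am _ (sphere_unitv R i)); have := Px _ (Am _ (sphereN (sphere_unitv R i))).
by rewrite !dotpZr dotpNr !dotp_unitv ler_norml; lra.
Qed.

Lemma nbhs0_polar A (c : 'I_n -> R) : (forall i, 0 <= c i) ->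
  (forall z, A z -> forall i, `|z ord0 i| <= c i) -> nbhs (0 : V) (polar A).
Proof.
move=> c0 Ac; have C0 : 0 <= \sum_i c i by exact: sumr_ge0.
apply/nbhs_ballP; exists (\sum_i c i + 1)^-1 => [|y y0 z Az].
  by rewrite /= invr_gt0; lra.
apply: (@le_trans _ _ (\sum_i (\sum_i c i + 1)^-1 * c i)).
  apply: ler_sum => i _; apply: le_trans (ler_norm _) _; rewrite normrM.
  by apply: ler_pM => //; [exact/ltW/ball0_coord | exact: Ac].
by rewrite -mulr_sumr ler_pdivrMl; lra.
Qed.

End Polar.

Section SupportFunction.
Variables (R : realType) (n : nat) (F : 'rV[R]_n -> R) (m : R).
Local Notation V := 'rV[R]_n.
Local Notation K := (KF F).
Implicit Types x y z u v w : V.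
Hypothesis m_gt0 : 0 < m.
Hypothesis m_le_F : forall v, sphere v -> m <= F v.

Let F_gt0 v : sphere v -> 0 < F v.
Proof. by move=> v1; exact: lt_le_trans (m_le_F v1). Qed.

Lemma KF_scale_sphere u : sphere u -> K (m *: u).
Proof.
move=> u1 v v1; rewrite dotpZl; apply: le_trans (m_le_F v1).
by rewrite ger_pMr // sphere_dotp_le1.
Qed.

Lemma KF_coord_bound z i : K z -> `|z ord0 i| <= F (unitv R i) + F (- unitv R i).
Proof.
move=> Kz; have := Kz _ (sphere_unitv R i); have := Kz _ (sphereN (sphere_unitv R i)).
have := F_gt0 (sphere_unitv R i); have := F_gt0 (sphereN (sphere_unitv R i)).
by rewrite dotpNr dotp_unitv ler_norml; lra.
Qed.

Let ratios u := [set F w / dotp u w | w in [set w | sphere w /\ 0 < dotp u w]].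

Let Wop_sphereE u : sphere u -> Wop F u = inf (ratios u).
Proof. by move=> u1; rewrite /Wop hext_sphere. Qed.

Let ratios_ge0 u : lbound (ratios u) 0.
Proof. by move=> _ [w [w1 uw] <-]; rewrite divr_ge0 // ltW // F_gt0. Qed.

Let ratios_neq0 u : sphere u -> ratios u !=set0.
Proof.
by move=> u1; exists (F u / dotp u u), u => //; split; rewrite // ((sphereP u).1 u1).
Qed.

Lemma Wop_ge0 u : sphere u -> 0 <= Wop F u.
Proof. by move=> u1; rewrite Wop_sphereE //; exact: lb_le_inf (ratios_neq0 u1) _. Qed.

Lemma KF_Wop u : sphere u -> K (Wop F u *: u).
Proof.
move=> u1 v v1; rewrite dotpZl.
have [uv|uv] := ltP 0 (dotp u v).
  rewrite -ler_pdivlMr // Wop_sphereE //.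
  by apply: ge_inf; [exists 0; exact: ratios_ge0 | exists v].
by apply: le_trans (ltW (F_gt0 v1)); rewrite mulr_ge0_le0 // Wop_ge0.
Qed.

Lemma Wop_max u t : sphere u -> K (t *: u) -> t <= Wop F u.
Proof.
move=> u1 Kt; rewrite Wop_sphereE //; apply: lb_le_inf; first exact: ratios_neq0.
by move=> _ [w [w1 uw] <-]; rewrite ler_pdivlMr // -dotpZl; exact: Kt.
Qed.

Let products v := [set Wop F w * dotp v w | w in @sphere R n].

Let Dop_sphereE v : sphere v -> Dop F v = sup (products v).
Proof. by move=> v1; rewrite /Dop /Aop hext_sphere. Qed.

Let products_le_F v : sphere v -> ubound (products v) (F v).
Proof. by move=> v1 _ [w w1 <-]; rewrite dotpC -dotpZl; exact: KF_Wop. Qed.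

Let products_neq0 v : sphere v -> products v !=set0.
Proof. by move=> v1; exists (Wop F v * dotp v v), v. Qed.

Lemma Dop_le_F v : sphere v -> Dop F v <= F v.
Proof.
by move=> v1; rewrite Dop_sphereE //; exact: ge_sup (products_neq0 v1) (products_le_F v1).
Qed.

Lemma Wop_dotp_le_Dop v w : sphere v -> sphere w -> Wop F w * dotp v w <= Dop F v.
Proof.
move=> v1 w1; rewrite Dop_sphereE //.
by apply: ub_le_sup; [exists (F v); exact: products_le_F | exists w].
Qed.

Lemma Dop_gt0 v : sphere v -> 0 < Dop F v.
Proof.
move=> v1; apply: lt_le_trans (Wop_dotp_le_Dop v1 v1).
rewrite ((sphereP v).1 v1) mulr1; apply: lt_le_trans m_gt0 _.
by apply: Wop_max => //; exact: KF_scale_sphere.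
Qed.

Lemma dotp_le_Dop v z : sphere v -> K z -> dotp v z <= Dop F v.
Proof.
move=> v1 Kz; have [->|z0] := eqVneq z 0; first by rewrite dotp0r ltW // Dop_gt0.
rewrite -(normalizeK z0) dotpZr; set u := _ *: z.
have u1 : sphere u := sphere_normalize z0.
have [vu|vu] := ltP 0 (dotp v u); last first.
  by apply: le_trans (ltW (Dop_gt0 v1)); rewrite mulr_ge0_le0 // ltW // enorm_gt0.
apply: le_trans (Wop_dotp_le_Dop v1 u1); rewrite ler_pM2r //.
by apply: Wop_max => //; rewrite normalizeK.
Qed.

Lemma Hypo_Iop_Dop : (0 < n)%N -> Hypo (Iop (Dop F)) = polar K.
Proof.
move=> n_gt0; apply/seteqP; split.
  move=> _ [v [l [v1 l0 l1 ->]]] z Kz.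
  rewrite /Iop hext_sphere // dotpZl dotpC -mulrA.
  apply: le_trans (ler_piMr l0 _) l1.
  by rewrite ler_pdivrMl ?Dop_gt0 // mulr1 dotpC dotp_le_Dop.
move=> x Px; have [->|x0] := eqVneq x 0.
  exists (unitv R (Ordinal n_gt0)), 0.
  by split => //; [exact: sphere_unitv | rewrite mul0r scale0r].
pose v := (enorm x)^-1 *: x; have v1 : sphere v := sphere_normalize x0.
have xpos := enorm_gt0 x0; have hpos := Dop_gt0 v1.
exists v, (enorm x * Dop F v); split => //.
- by rewrite mulr_ge0 // ltW.
- rewrite -ler_pdivlMl // mulr1 Dop_sphereE //.
  apply: ge_sup (products_neq0 v1) _ => _ [w w1 <-].
  rewrite /v dotpZl mulrCA; apply: ler_piMr; first by rewrite invr_ge0 ltW.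
  by rewrite -dotpZr; apply: Px; exact: KF_Wop.
- by rewrite /Iop hext_sphere // -mulrA mulfV ?gt_eqF // mulr1 normalizeK.
Qed.

Lemma polar_polar_KF : (0 < n)%N -> polar (polar K) = K.
Proof.
move=> n_gt0; apply/seteqP; split; last exact: sub_polar_polar.
move=> z Pz u u1; apply: le_trans (Dop_le_F u1).
have Pu : polar K ((Dop F u)^-1 *: u).
  rewrite -Hypo_Iop_Dop //; exists u, 1; split => //.
  by rewrite mul1r /Iop hext_sphere.
by have := Pz _ Pu; rewrite dotpZr ler_pdivrMl ?Dop_gt0 // mulr1.
Qed.

End SupportFunction.

Theorem lemma3p1 (R : realType) (n : nat) (F : 'rV[R]_n -> R) :
  (2 <= n)%N -> integrand F ->
  let O := Hypo (Iop (Dop F)) in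
  polar O = KF F /\ polar (KF F) = O /\
  [/\ compact O, convex_set (O : set (convex_lmodType 'rV[R]_n)) & (interior O) 0].
Proof.
move=> n_ge2 [lsc [_ F_gt0]] O.
have n_gt0 : (0 < n)%N by exact: leq_trans n_ge2.
have [m m_gt0 m_le_F] :=
  lower_semicontinuous_compact_pos_lb lsc (@sphere_compact R n) F_gt0.
have -> : O = polar (KF F) by exact: Hypo_Iop_Dop m_gt0 m_le_F n_gt0.
split; first exact: polar_polar_KF m_gt0 m_le_F n_gt0.
split=> //; split.
- by apply: (polar_compact m_gt0) => u u1; exact: KF_scale_sphere.
- exact: polar_convex.
- apply: (nbhs0_polar (c := fun i => F (unitv R i) + F (- unitv R i))) => [i|z Kz i].
    by rewrite addr_ge0 // ltW // F_gt0 //; [exact: sphere_unitv | exact/sphereN/sphere_unitv].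
  exact: KF_coord_bound m_gt0 m_le_F _ _ Kz.
Qed.
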